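(* Let $D$ be a digraph with $n$ vertices and $a$ arcs, with outdegrees $d_1^+,\dots,d_n^+$, and let $\alpha\in[0,1)$. Then $$\|D_\alpha\|_*\le \sqrt{n\Big[(1-\alpha)^2a+\alpha^2\sum_{i=1}^n (d_i^+)^2\Big]},$$ with equality if and only if either (a) $D$ has no arcs, or (b) $\alpha=0$ and $D$ is a direct sum (vertex-disjoint union) of directed cycles.
   Context: Digraphs are simple: a finite vertex set and a set of arcs, which are ordered pairs of distinct vertices, with no parallel arcs (a pair of opposite arcs is allowed). A directed cycle of order $m\ge 2$ has vertices $w_1,\dots,w_m$ and arcs $(w_1,w_2),\dots,(w_{m-1},w_m),(w_m,w_1)$. For a digraph $D$ on vertices $v_1,\dots,v_n$, the adjacency matrix $A(D)=(a_{ij})$ has $a_{ij}=1$ if $(v_i,v_j)$ is an arc and $0$ otherwise; $d_i^+$ is the outdegree of $v_i$, and $\Delta^+(D)=\mathrm{diag}(d_1^+,\dots,d_n^+)$. For $\alpha\in[0,1)$, $A_\alpha(D)=\alpha\Delta^+(D)+(1-\alpha)A(D)$. The $\alpha$-trace norm $\|D_\alpha\|_*$ is the sum of the singular values of $A_\alpha(D)$, i.e. of the nonnegative square roots of the eigenvalues of $A_\alpha(D)A_\alpha(D)^T$, with multiplicity. *)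

From HB Require Import structures.
From mathcomp Require Import all_boot all_order all_algebra.
From mathcomp Require Import polyrcf.
Set Implicit Arguments. Unset Strict Implicit. Unset Printing Implicit Defensive.
Import Order.TTheory GRing.Theory Num.Theory.
Local Open Scope ring_scope.

(* A (simple) digraph on the vertex set 'I_n is an irreflexive relation
   D : rel 'I_n ; (i, j) is an arc iff D i j. *)
Definition digraph_irrefl n (D : rel 'I_n) : Prop := forall i, D i i = false.

Definition narcs n (D : rel 'I_n) : nat := #|[set ij : 'I_n * 'I_n | D ij.1 ij.2]|.

Definition outdeg n (D : rel 'I_n) (i : 'I_n) : nat := #|[set j | D i j]|.

Definition adjmx (R : nzRingType) n (D : rel 'I_n) : 'M[R]_n :=
  \matrix_(i, j) (D i j)%:R.
Definition outdegmx (R : nzRingType) n (D : rel 'I_n) : 'M[R]_n :=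
  \matrix_(i, j) ((i == j)%:R * (outdeg D i)%:R).

Definition Aalpha (R : nzRingType) n (D : rel 'I_n) (alpha : R) : 'M[R]_n :=
  alpha *: outdegmx R D + (1 - alpha) *: adjmx R D.

Definition sum_sqrt_eigs (R : rcfType) n (S : 'M[R]_n) : R :=
  let p := char_poly S in
  \sum_(x <- rootsR p) (mup x p)%:R * Num.sqrt x.

(* trace norm: sum of singular values of M, i.e. of the nonnegative square
   roots of the eigenvalues of M M^T with multiplicity *)
Definition trace_norm (R : rcfType) n (M : 'M[R]_n) : R :=
  sum_sqrt_eigs (M *m M^T).

Definition alpha_trace_norm (R : rcfType) n (D : rel 'I_n) (alpha : R) : R :=
  trace_norm (Aalpha D alpha).

(* The arcs of the directed cycle with vertices w_1,...,w_m listed by s: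
   (w_k, w_{k+1}) and (w_m, w_1). *)
Definition dicycle_arcs (T : eqType) (s : seq T) : rel T :=
  fun x y => (x \in s) && (y == next s x).

Definition direct_sum_of_dicycles n (D : rel 'I_n) : Prop :=
  exists ss : seq (seq 'I_n),
    [/\ all (fun s => uniq s && (2 <= size s)%N) ss,
        uniq (flatten ss),
        (forall v : 'I_n, v \in flatten ss) &
        (forall i j, D i j = has (fun s => dicycle_arcs s i j) ss)].

From HB Require Import structures.
From mathcomp Require Import all_boot all_order all_algebra.
From mathcomp Require Import fingroup perm.
From mathcomp Require Import polyrcf complex ring.
Set Implicit Arguments. Unset Strict Implicit. Unset Printing Implicit Defensive.
Import Order.TTheory GRing.Theory Num.Theory.
Local Open Scope ring_scope.

(* The singular values of A = A_alpha(D) are the square roots of the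
   eigenvalues of the symmetric matrix A A^T, which are real and nonnegative,
   so the sum of their squares is tr (A A^T) = (1 - alpha)^2 a
   + alpha^2 sum_i (d_i^+)^2, and Cauchy-Schwarz bounds their sum by
   sqrt (n tr (A A^T)).  Equality holds iff all singular values coincide,
   i.e. iff A A^T = c I: if c is its only eigenvalue, A A^T - c I is symmetric
   and nilpotent, hence zero.
   As A is nonnegative, A A^T = c I says that the rows of A have disjoint
   supports and a common norm; if D has an arc, c > 0, so every vertex has an
   out-arc.  An arc i -> j then puts 1 - alpha in row i and alpha d_j^+ in
   row j of column j, forcing alpha = 0; and then every vertex has exactly
   one out-neighbour and at most one in-neighbour, so D is the graph of a
   fixed-point-free permutation, i.e. a direct sum of directed cycles. *)

Lemma mem_uniq_flatten_eq (T : eqType) (ss : seq (seq T)) s1 s2 x :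
  uniq (flatten ss) -> s1 \in ss -> s2 \in ss -> x \in s1 -> x \in s2 -> s1 = s2.
Proof.
elim: ss => [//|s ss IH] /=; rewrite cat_uniq => /and3P [_ s_ss uniq_ss].
have disj t : t \in ss -> x \in s -> x \in t -> False.
  move=> t_ss xs xt; move/negP: s_ss; apply; apply/hasP; exists x => //.
  by apply/flattenP; exists t.
rewrite !inE => /predU1P [->|s1_ss] /predU1P [->|s2_ss] // x1 x2.
- by case: (disj s2).
- by case: (disj s1).
- exact: IH.
Qed.

Section DirectSumOfDicycles.
Variables (n : nat) (D : rel 'I_n).

Lemma direct_sum_of_dicycles_perm :
  direct_sum_of_dicycles D -> exists s : 'S_n, forall i j, D i j = (j == s i).
Proof.
move=> [ss [all_ss uniq_ss cover_ss arcsD]].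
pose cyc (i : 'I_n) := nth [::] ss (find (fun s => i \in s) ss).
have has_i i : has (fun s => i \in s) ss.
  by have /flattenP [s s_ss i_s] := cover_ss i; apply/hasP; exists s.
have cyc_ss i : cyc i \in ss by rewrite mem_nth // -has_find.
have cyc_i i : i \in cyc i by exact: nth_find (has_i i).
have cyc_eq i s : s \in ss -> i \in s -> s = cyc i.
  by move=> s_ss i_s; apply: mem_uniq_flatten_eq uniq_ss s_ss (cyc_ss i) i_s _.
have uniq_cyc i : uniq (cyc i) by have /andP [] := allP all_ss _ (cyc_ss i).
have inj_next : injective (fun i => next (cyc i) i).
  move=> i k eq_next.
  have cyc_ik : cyc i = cyc k.
    apply: (mem_uniq_flatten_eq uniq_ss (cyc_ss i) (cyc_ss k) (x := next (cyc i) i)).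
      by rewrite mem_next.
    by rewrite eq_next mem_next.
  by have := prev_next (uniq_cyc i) i; rewrite eq_next cyc_ik prev_next.
exists (perm inj_next) => i j; rewrite permE arcsD.
apply/hasP/eqP => [[s s_ss /andP [i_s /eqP ->]]|->]; first by rewrite -(cyc_eq i s).
by exists (cyc i); rewrite // /dicycle_arcs cyc_i /=.
Qed.

Lemma perm_direct_sum_of_dicycles (s : 'S_n) :
  (forall i, s i != i) -> (forall i j, D i j = (j == s i)) ->
  direct_sum_of_dicycles D.
Proof.
move=> s_neq arcsD.
have orbit_sym : connect_sym (frel s) := fconnect_sym (@perm_inj _ s).
have next_orbit (x i : 'I_n) : i \in orbit s x -> next (orbit s x) i = s i.
  by move=> i_x; have /eqP := next_cycle (cycle_orbit (@perm_inj _ s) x) i_x.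
have mem_orbit_root (v : 'I_n) : v \in orbit s (froot s v).
  by rewrite -fconnect_orbit orbit_sym connect_root.
pose roots := [seq x <- enum 'I_n | froots s x].
exists (map (orbit s) roots); split.
- apply/allP => _ /mapP [x _ ->]; rewrite orbit_uniq /=.
  apply: (uniq_leq_size (s1 := [:: x; s x])); first by rewrite /= inE eq_sym s_neq.
  by apply/allP; rewrite /= in_orbit mem_orbit // in_orbit.
- have : all (froots s) roots by apply/allP => x; rewrite mem_filter => /andP [].
  have : uniq roots by rewrite filter_uniq // enum_uniq.
  elim: roots => [//|x rs IH] /= /andP [x_rs uniq_rs] /andP [root_x roots_rs].
  rewrite cat_uniq orbit_uniq IH // andbT /=.
  apply/hasP => -[y /flattenP [_ /mapP [z z_rs ->] y_z] y_x].
  have xz : fconnect s x z.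
    apply: (connect_trans (y := y)); first by rewrite fconnect_orbit.
    by rewrite orbit_sym fconnect_orbit.
  move/(fingraph.rootP orbit_sym): xz; rewrite (eqP root_x).
  by rewrite (eqP (allP roots_rs z z_rs)) => eq_xz; rewrite eq_xz z_rs in x_rs.
- move=> v; apply/flattenP; exists (orbit s (froot s v)) => //; apply: map_f.
  by rewrite mem_filter roots_root // mem_enum.
- move=> i j; rewrite arcsD; apply/eqP/hasP => [->|[_ /mapP [x _ ->]]].
    exists (orbit s (froot s i)).
      by apply: map_f; rewrite mem_filter roots_root ?mem_enum.
    by rewrite /dicycle_arcs mem_orbit_root next_orbit ?mem_orbit_root /=.
  by move=> /andP [i_x /eqP ->]; rewrite next_orbit.
Qed.

Lemma perm_of_out_arc_in_arc_uniq :
  (forall i, exists j, D i j) -> (forall i k j, D i j -> D k j -> i = k) ->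
  exists s : 'S_n, forall i j, D i j = (j == s i).
Proof.
move=> out_arc in_uniq.
pose f i := odflt i [pick j | D i j].
have D_f i : D i (f i).
  rewrite /f; case: pickP => [//|no_arc].
  by have [j D_ij] := out_arc i; rewrite no_arc in D_ij.
have inj_f : injective f.
  by move=> i k f_ik; apply: (in_uniq _ _ _ (D_f i)); rewrite f_ik.
exists (perm inj_f) => i j; rewrite permE; apply/idP/eqP => [D_ij|->//].
have /codomP [k j_fk] := injF_onto inj_f j; rewrite j_fk in D_ij *.
by rewrite (in_uniq _ _ _ D_ij (D_f k)).
Qed.
End DirectSumOfDicycles.

Section GramMatrix.
Variables (R : realDomainType) (m n : nat) (M : 'M[R]_(m, n)).

Lemma mulmx_trmx_diag i : (M *m M^T) i i = \sum_j M i j ^+ 2.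
Proof. by rewrite mxE; apply: eq_bigr => j _; rewrite mxE expr2. Qed.

Lemma mulmx_trmx_diag_ge0 i : 0 <= (M *m M^T) i i.
Proof. by rewrite mulmx_trmx_diag sumr_ge0 // => j _; rewrite sqr_ge0. Qed.

Lemma mulmx_trmx_diag_eq0 i : ((M *m M^T) i i == 0) = (row i M == 0).
Proof.
rewrite mulmx_trmx_diag psumr_eq0 => [|j _]; last by rewrite sqr_ge0.
apply/allP/eqP => [M_i0|M_i0 j _].
  apply/rowP => j; rewrite !mxE; apply/eqP; rewrite -sqrf_eq0.
  exact: M_i0 (mem_index_enum _).
by have := congr1 (fun v : 'rV_n => v 0 j) M_i0; rewrite !mxE => /= ->; rewrite expr0n.
Qed.

Lemma mulmx_trmx_eq0 : (M *m M^T == 0) = (M == 0).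
Proof.
apply/eqP/eqP => [MMt0|->]; last by rewrite mul0mx.
apply/row_matrixP => i; rewrite row0; apply/eqP.
by rewrite -mulmx_trmx_diag_eq0 MMt0 mxE.
Qed.

Lemma mulmx_trmx_nneg_eq0 i k j : (forall i j, 0 <= M i j) ->
  (M *m M^T) i k = 0 -> M i j * M k j = 0.
Proof.
move=> M_ge0; rewrite mxE => /eqP; rewrite psumr_eq0 => [|l _]; last first.
  by rewrite mxE mulr_ge0.
by move=> /allP /(_ j (mem_index_enum _)) /eqP; rewrite mxE.
Qed.

End GramMatrix.

Lemma trmxX (R : comNzRingType) n (A : 'M[R]_n) k : (A ^+ k)^T = A^T ^+ k.
Proof.
elim: k => [|k IH]; first by rewrite !expr0 trmx1.
by rewrite exprS -mulmxE trmx_mul IH mulmxE -exprSr.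
Qed.

Lemma sym_nilpotent_eq0 (R : realDomainType) n (A : 'M[R]_n) k :
  A^T = A -> A ^+ k.+1 = 0 -> A = 0.
Proof.
move=> symA; elim: k => [|k IH] Ak; first by rewrite -[A]expr1.
apply: IH; apply/eqP; rewrite -mulmx_trmx_eq0 trmxX symA mulmxE -exprD.
by rewrite addSnnS addnC exprD Ak mul0r.
Qed.

Section SymmetricSpectrum.
Variable R : rcfType.
Local Notation toC := (real_complex R).

Lemma sym_eigenvalue_real n (S : 'M[R]_n) (z : R[i]) : S^T = S ->
  eigenvalue (map_mx toC S) z -> z = toC (complex.Re z).
Proof.
move=> symS /eigenvalueP [v vS v_neq0].
set SC := map_mx toC S in vS.
set w := map_mx conjc v.
have wS : w *m SC = conjc z *: w.
  have conj_SC : map_mx conjc SC = SC by apply/matrixP => i j; rewrite !mxE conjc_real.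
  by rewrite -conj_SC -map_mxM vS map_mxZ.
have symSC : SC^T = SC by rewrite map_trmx symS.
pose q := (v *m w^T) 0 0.
have q_neq0 : q != 0.
  rewrite /q mxE psumr_eq0 => [|k _]; last by rewrite !mxE mulcJ_ge0.
  apply: contra v_neq0 => /allP v0; apply/eqP/rowP => k; rewrite !mxE.
  by have /= := v0 k (mem_index_enum _); rewrite !mxE mulf_eq0 conjc_eq0 orbb => /eqP.
have : z * q = conjc z * q.
  have -> : z * q = (v *m SC *m w^T) 0 0 by rewrite vS -scalemxAl mxE.
  by rewrite -mulmxA -symSC -trmx_mul wS linearZ /= -scalemxAr mxE.
move/(mulIf q_neq0) => {vS wS}; case: z => a b /= [] /eqP.
by rewrite -subr_eq0 opprK -mulr2n mulrn_eq0 => /eqP ->.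
Qed.

Lemma char_poly_sym_split n (S : 'M[R]_n) : S^T = S ->
  exists rs : seq R, char_poly S = \prod_(r <- rs) ('X - r%:P).
Proof.
move=> symS.
have [zs split_zs] := closed_field_poly_normal (char_poly (map_mx toC S)).
rewrite (monicP (char_poly_monic _)) scale1r in split_zs.
exists (map (@complex.Re R) zs); apply: (@map_poly_inj _ _ toC).
rewrite map_char_poly split_zs rmorph_prod big_map; apply: eq_big_seq => z zs_z.
have z_real : z = toC (complex.Re z).
  by apply: sym_eigenvalue_real symS _; rewrite eigenvalue_root_char split_zs root_prod_XsubC.
by rewrite rmorphB /= map_polyX map_polyC /= -z_real.
Qed.

Lemma sum_rootsR_mup (p : {poly R}) (rs : seq R) (F : R -> R) :
  p = \prod_(r <- rs) ('X - r%:P) ->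
  \sum_(x <- rootsR p) (mup x p)%:R * F x = \sum_(r <- rs) F r.
Proof.
move=> p_rs; have p_neq0 : p != 0 by rewrite p_rs monic_neq0 // monic_prod_XsubC.
have perm_roots : perm_eq (rootsR p) (undup rs).
  apply: uniq_perm; [exact: uniq_roots | exact: undup_uniq | move=> x].
  have := roots_on_rootsR p_neq0 x; rewrite in_itv /= mem_undup => <-.
  by rewrite p_rs root_prod_XsubC.
rewrite (perm_big _ perm_roots) -[RHS]big_undup_iterop_count /=.
apply: eq_bigr => x _.
by rewrite p_rs mu_prod_XsubC Monoid.iteropE iter_addr_0 mulr_natl.
Qed.

Lemma eigenvalue_gram_ge0 m n (M : 'M[R]_(m, n)) r :
  eigenvalue (M *m M^T) r -> 0 <= r.
Proof.
move=> /eigenvalueP [v vMMt v_neq0].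
have v_gt0 : 0 < (v *m v^T) 0 0.
  by rewrite lt_def mulmx_trmx_diag_eq0 mulmx_trmx_diag_ge0 row_id v_neq0.
rewrite -(pmulr_lge0 _ v_gt0).
have <- : (v *m (M *m M^T) *m v^T) 0 0 = r * (v *m v^T) 0 0.
  by rewrite vMMt -scalemxAl mxE.
have -> : v *m (M *m M^T) *m v^T = (v *m M) *m (v *m M)^T.
  by rewrite trmx_mul !mulmxA.
exact: mulmx_trmx_diag_ge0.
Qed.
End SymmetricSpectrum.

Lemma sum_sqr_dev (R : comNzRingType) (a : seq R) :
  (size a)%:R * ((size a)%:R * \sum_(x <- a) x ^+ 2 - (\sum_(x <- a) x) ^+ 2)
  = \sum_(x <- a) ((size a)%:R * x - \sum_(y <- a) y) ^+ 2.
Proof.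
set k := (size a)%:R; set s := \sum_(y <- a) y.
transitivity (\sum_(x <- a) (k ^+ 2 * x ^+ 2 - (2 * k * s) * x + s ^+ 2)).
  rewrite big_split /= sumrB -!mulr_sumr big_const_seq count_predT iter_addr_0.
  by rewrite -mulr_natr -/k -/s; ring.
by apply: eq_bigr => x _; ring.
Qed.

Section CauchySchwarz.
Variables (R : rcfType) (a : seq R).
Local Notation k := ((size a)%:R : R).

Lemma sum_le_sqrt_size_sum_sqr :
  \sum_(x <- a) x <= Num.sqrt (k * \sum_(x <- a) x ^+ 2).
Proof.
have [a0|k_gt0] := eqVneq (size a) 0%N.
  by rewrite (size0nil a0) !big_nil mulr0 sqrtr0.
rewrite -(lt0n (size a)) -(ltr0n R) in k_gt0.
apply: le_trans (ler_norm _) _; rewrite -sqrtr_sqr ler_sqrt; last first.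
  by rewrite mulr_ge0 ?ler0n // sumr_ge0 // => x _; rewrite sqr_ge0.
rewrite -subr_ge0 -(pmulr_rge0 _ k_gt0) sum_sqr_dev.
by rewrite sumr_ge0 // => x _; rewrite sqr_ge0.
Qed.

Lemma sum_eq_sqrt_size_sum_sqr :
  \sum_(x <- a) x = Num.sqrt (k * \sum_(x <- a) x ^+ 2) ->
  {in a, forall x, k * x = \sum_(y <- a) y}.
Proof.
move=> eq_sum x a_x; apply/eqP; rewrite -subr_eq0 -sqrf_eq0.
have sum_sqr_ge0 : 0 <= k * \sum_(x <- a) x ^+ 2.
  by rewrite mulr_ge0 ?ler0n // sumr_ge0 // => y _; rewrite sqr_ge0.
have /eqP : k * (k * \sum_(x <- a) x ^+ 2 - (\sum_(x <- a) x) ^+ 2) = 0.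
  by rewrite eq_sum sqr_sqrtr // subrr mulr0.
rewrite sum_sqr_dev big_seq psumr_eq0 => [/allP/(_ x a_x)|y _]; last exact: sqr_ge0.
by rewrite a_x.
Qed.
End CauchySchwarz.

Lemma sym_char_poly_single_root (R : realDomainType) n (S : 'M[R]_n) c :
  S^T = S -> char_poly S = ('X - c%:P) ^+ n -> S = c%:M.
Proof.
case: n S => [|n] S symS charS; first by apply/matrixP => -[].
apply/eqP; rewrite -subr_eq0; apply/eqP/(sym_nilpotent_eq0 (k := n)).
  by rewrite linearB /= symS tr_scalar_mx.
have := Cayley_Hamilton S; rewrite charS rmorphXn /= rmorphB /=.
by rewrite horner_mx_X horner_mx_C.
Qed.

Lemma sum_sqr_sqrt (R : rcfType) (rs : seq R) :
  {in rs, forall r, 0 <= r} -> \sum_(r <- rs) Num.sqrt r ^+ 2 = \sum_(r <- rs) r.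
Proof. by move=> rs_ge0; apply: eq_big_seq => r /rs_ge0 /sqr_sqrtr. Qed.

Section TraceNorm.
Variables (R : rcfType) (n : nat) (M : 'M[R]_n).

Let sym_gram : (M *m M^T)^T = M *m M^T.
Proof. by rewrite trmx_mul trmxK. Qed.

Lemma trace_norm_gram_spectrum : exists rs : seq R,
  [/\ char_poly (M *m M^T) = \prod_(r <- rs) ('X - r%:P), size rs = n,
      {in rs, forall r, 0 <= r},
      trace_norm M = \sum_(r <- rs) Num.sqrt r &
      \sum_(r <- rs) r = \tr (M *m M^T)].
Proof.
have [rs char_rs] := char_poly_sym_split sym_gram.
have size_rs : size rs = n.
  by have := size_char_poly (M *m M^T); rewrite char_rs size_prod_XsubC => -[].
exists rs; split => //.
- move=> r rs_r; apply: (@eigenvalue_gram_ge0 _ _ _ M).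
  by rewrite eigenvalue_root_char char_rs root_prod_XsubC.
- exact: sum_rootsR_mup.
case: n M sym_gram char_rs size_rs => [|n'] M' _ char_rs size_rs.
  by rewrite (size0nil size_rs) big_nil /mxtrace big_ord0.
by apply: oppr_inj; rewrite -coefPn_prod_XsubC ?size_rs // -char_rs char_poly_trace.
Qed.

Lemma trace_norm_le_sqrt_trace : trace_norm M <= Num.sqrt (n%:R * \tr (M *m M^T)).
Proof.
have [rs [_ size_rs rs_ge0 -> <-]] := trace_norm_gram_spectrum.
have := sum_le_sqrt_size_sum_sqr (map Num.sqrt rs).
by rewrite size_map size_rs !big_map sum_sqr_sqrt.
Qed.

Lemma trace_norm_gram_scalar c :
  M *m M^T = c%:M -> trace_norm M = Num.sqrt (n%:R * \tr (M *m M^T)).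
Proof.
move=> gram_c; have [rs [char_rs size_rs _ -> _]] := trace_norm_gram_spectrum.
have rs_c : {in rs, forall r, r = c}.
  move=> r rs_r; have : eigenvalue (M *m M^T) r.
    by rewrite eigenvalue_root_char char_rs root_prod_XsubC.
  rewrite gram_c => /eigenvalueP [v]; rewrite mul_mx_scalar => /eqP.
  by rewrite -subr_eq0 -scalerBl scaler_eq0 subr_eq0 => /orP [/eqP|/eqP->]; rewrite ?eqxx.
rewrite (eq_big_seq (fun=> Num.sqrt c)) => [|r /rs_c -> //].
rewrite big_const_seq count_predT size_rs iter_addr_0 gram_c mxtrace_scalar.
rewrite -[c *+ n]mulr_natl -[Num.sqrt c *+ n]mulr_natl mulrA -expr2.
by rewrite sqrtrM ?sqr_ge0 // sqrtr_sqr ger0_norm ?ler0n.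
Qed.

Lemma trace_norm_eq_sqrt_trace_scalar :
  trace_norm M = Num.sqrt (n%:R * \tr (M *m M^T)) -> exists c, M *m M^T = c%:M.
Proof.
have [rs [char_rs size_rs rs_ge0 -> <-]] := trace_norm_gram_spectrum.
move=> eq_sum; have [n0|n_gt0] := posnP n.
  by exists 0; apply/matrixP => i; have := ltn_ord i; rewrite [X in (_ < X)%N]n0.
pose t := (\sum_(r <- rs) Num.sqrt r) / n%:R.
have rs_t : {in rs, forall r, r = t ^+ 2}.
  move=> r rs_r; rewrite -(sqr_sqrtr (rs_ge0 r rs_r)); congr (_ ^+ 2).
  have := @sum_eq_sqrt_size_sum_sqr _ (map Num.sqrt rs).
  rewrite size_map size_rs !big_map sum_sqr_sqrt // => /(_ eq_sum _ (map_f _ rs_r)).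
  by rewrite /t => <-; rewrite mulrC mulKf // pnatr_eq0 -lt0n.
exists (t ^+ 2); apply: sym_char_poly_single_root sym_gram _.
rewrite char_rs (eq_big_seq (fun=> 'X - (t ^+ 2)%:P)) => [|r /rs_t -> //].
by rewrite big_const_seq count_predT size_rs iter_mulr_1.
Qed.

Lemma trace_norm_eq_sqrt_traceP :
  trace_norm M = Num.sqrt (n%:R * \tr (M *m M^T)) <-> exists c, M *m M^T = c%:M.
Proof.
split=> [|[c]]; [exact: trace_norm_eq_sqrt_trace_scalar | exact: trace_norm_gram_scalar].
Qed.
End TraceNorm.

Section AlphaAdjacency.
Variables (R : realDomainType) (n : nat) (D : rel 'I_n).

Lemma narcs_sum : (narcs D)%:R = \sum_i \sum_j (D i j)%:R :> R.
Proof.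
rewrite /narcs -sum1_card big_mkcond natr_sum pair_bigA /=.
by apply: eq_bigr => -[i j] _; rewrite inE; case: (D i j).
Qed.

Lemma outdeg_eq0 i : (outdeg D i == 0)%N = [forall j, ~~ D i j].
Proof.
rewrite /outdeg cards_eq0; apply/eqP/forallP => [no_arc j|no_arc].
  by apply/negP => D_ij; have := in_set0 j; rewrite -no_arc inE D_ij.
by apply/setP => j; rewrite inE in_set0 (negbTE (no_arc j)).
Qed.

Lemma Aalpha_offdiag (a : R) i j : i != j -> Aalpha D a i j = (1 - a) * (D i j)%:R.
Proof. by move=> /negbTE ne_ij; rewrite !mxE ne_ij mul0r mulr0 add0r. Qed.

Lemma Aalpha_ge0 (a : R) i j : 0 <= a <= 1 -> 0 <= Aalpha D a i j.
Proof. by case/andP=> a_ge0 a_le1; rewrite !mxE addr_ge0 ?mulr_ge0 ?subr_ge0. Qed.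

Lemma Aalpha_row_sink (a : R) i : [forall j, ~~ D i j] -> row i (Aalpha D a) = 0.
Proof.
move=> sink_i; have /eqP outdeg_i : (outdeg D i == 0)%N by rewrite outdeg_eq0.
apply/rowP => j; rewrite !mxE outdeg_i (negbTE (forallP sink_i j)).
by rewrite !mulr0 addr0.
Qed.

Lemma Aalpha0 : Aalpha D 0 = adjmx R D.
Proof. by rewrite /Aalpha scale0r add0r subr0 scale1r. Qed.

Lemma adjmx_perm (s : 'S_n) : (forall i j, D i j = (j == s i)) -> adjmx R D = perm_mx s.
Proof. by move=> D_s; apply/matrixP => i j; rewrite !mxE D_s eq_sym. Qed.

Hypothesis irrD : digraph_irrefl D.

Lemma Aalpha_diag (a : R) i : Aalpha D a i i = a * (outdeg D i)%:R.
Proof. by rewrite !mxE eqxx irrD mul1r mulr0 addr0. Qed.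

Lemma mxtrace_Aalpha_gram (a : R) :
  \tr (Aalpha D a *m (Aalpha D a)^T) =
  (1 - a) ^+ 2 * (narcs D)%:R + a ^+ 2 * \sum_(i < n) ((outdeg D i)%:R) ^+ 2.
Proof.
rewrite /mxtrace narcs_sum mulr_sumr mulr_sumr -big_split /=.
apply: eq_bigr => i _; rewrite mulmx_trmx_diag (bigD1 i) //= Aalpha_diag.
rewrite [in RHS]mulr_sumr [in RHS](bigD1 i) //= irrD mulr0 add0r addrC.
congr (_ + _); last by ring.
by apply: eq_bigr => j ne_ji; rewrite Aalpha_offdiag 1?eq_sym //; case: (D i j) => /=; ring.
Qed.
End AlphaAdjacency.

Section AlphaGramScalar.
Variables (R : realDomainType) (n : nat) (D : rel 'I_n) (a : R) (c : R).
Hypotheses (irrD : digraph_irrefl D) (a_ge0 : 0 <= a) (a_lt1 : a < 1).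
Hypothesis gram_c : Aalpha D a *m (Aalpha D a)^T = c%:M.

Local Notation A := (Aalpha D a).

Let arc_neq i j : D i j -> i != j.
Proof. by apply: contraTneq => ->; rewrite irrD. Qed.

Let A_ge0 i j : 0 <= A i j.
Proof. by apply: Aalpha_ge0; rewrite a_ge0 ltW. Qed.

Let gram_offdiag i k : i != k -> (A *m A^T) i k = 0.
Proof. by move=> /negbTE ne_ik; rewrite gram_c mxE ne_ik mulr0n. Qed.

Lemma Aalpha_gram_scalar_out_arc i0 j0 : D i0 j0 -> forall i, exists j, D i j.
Proof.
move=> D_ij0 i; have c_neq0 : c != 0.
  have := mulmx_trmx_diag_eq0 A i0; rewrite gram_c mxE eqxx mulr1n => ->.
  apply/eqP => /rowP /(_ j0).
  rewrite [LHS]mxE [RHS]mxE (Aalpha_offdiag _ _ (arc_neq D_ij0)) D_ij0.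
  by move/eqP; rewrite mulr1 subr_eq0 eq_sym (lt_eqF a_lt1).
have [/existsP //|] := boolP [exists j, D i j]; rewrite negb_exists => sink_i.
have : row i A != 0 by rewrite -mulmx_trmx_diag_eq0 gram_c mxE eqxx mulr1n.
by rewrite Aalpha_row_sink // eqxx.
Qed.

Lemma Aalpha_gram_scalar_alpha0 i0 j0 : D i0 j0 -> a = 0.
Proof.
move=> D_ij0; have outdeg_j0 : (outdeg D j0)%:R != 0 :> R.
  have [k D_jk] := Aalpha_gram_scalar_out_arc D_ij0 j0.
  by rewrite pnatr_eq0 outdeg_eq0 negb_forall; apply/existsP; exists k; rewrite negbK.
have := mulmx_trmx_nneg_eq0 j0 A_ge0 (gram_offdiag (arc_neq D_ij0)).
rewrite (Aalpha_offdiag _ _ (arc_neq D_ij0)) D_ij0 Aalpha_diag // mulr1 => /eqP.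
by rewrite !mulf_eq0 subr_eq0 eq_sym (lt_eqF a_lt1) (negbTE outdeg_j0) orbF => /eqP.
Qed.

Lemma Aalpha_gram_scalar_in_arc_uniq i k j : D i j -> D k j -> i = k.
Proof.
move=> D_ij D_kj; apply/eqP/contraT => ne_ik.
have := mulmx_trmx_nneg_eq0 j A_ge0 (gram_offdiag ne_ik).
rewrite !Aalpha_offdiag ?arc_neq // D_ij D_kj mulr1 => /eqP.
by rewrite mulf_eq0 orbb subr_eq0 eq_sym (lt_eqF a_lt1).
Qed.
End AlphaGramScalar.

Lemma Aalpha_gram_scalarP (R : realDomainType) n (D : rel 'I_n) (a : R) :
  digraph_irrefl D -> 0 <= a -> a < 1 ->
  (exists c, Aalpha D a *m (Aalpha D a)^T = c%:M) <->
  (forall i j, D i j = false) \/ (a = 0 /\ direct_sum_of_dicycles D).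
Proof.
move=> irrD a_ge0 a_lt1.
split=> [[c gram_c]|[no_arc|[-> /direct_sum_of_dicycles_perm [s D_s]]]].
- have [/existsP [i0 /existsP [j0 D_ij0]]|no_arc] := boolP [exists i, exists j, D i j].
    right; split; first exact: (Aalpha_gram_scalar_alpha0 irrD a_ge0 a_lt1 gram_c D_ij0).
    have [s D_s] := perm_of_out_arc_in_arc_uniq
      (Aalpha_gram_scalar_out_arc irrD a_lt1 gram_c D_ij0)
      (Aalpha_gram_scalar_in_arc_uniq irrD a_ge0 a_lt1 gram_c).
    by apply: (perm_direct_sum_of_dicycles _ D_s) => i; rewrite eq_sym -D_s irrD.
  left=> i j; apply/negbTE; move: no_arc; rewrite negb_exists => /forallP/(_ i).
  by rewrite negb_exists => /forallP/(_ j).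
- exists 0; suff -> : Aalpha D a = 0 by rewrite mul0mx raddf0.
  apply/row_matrixP => i; rewrite row0 Aalpha_row_sink //.
  by apply/forallP => j; rewrite no_arc.
- by exists 1; rewrite Aalpha0 (adjmx_perm _ D_s) tr_perm_mx -perm_mxM mulgV perm_mx1.
Qed.

Theorem theorem3p1 (R : rcfType) (n : nat) (D : rel 'I_n) (alpha : R) :
  digraph_irrefl D -> 0 <= alpha -> alpha < 1 ->
  alpha_trace_norm D alpha <=
    Num.sqrt (n%:R * ((1 - alpha) ^+ 2 * (narcs D)%:R
                      + alpha ^+ 2 * \sum_(i < n) ((outdeg D i)%:R) ^+ 2))
  /\
  (alpha_trace_norm D alpha =
    Num.sqrt (n%:R * ((1 - alpha) ^+ 2 * (narcs D)%:R
                      + alpha ^+ 2 * \sum_(i < n) ((outdeg D i)%:R) ^+ 2))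
   <-> (forall i j, D i j = false)
       \/ (alpha = 0 /\ direct_sum_of_dicycles D)).
Proof.
move=> irrD alpha_ge0 alpha_lt1.
rewrite /alpha_trace_norm -(mxtrace_Aalpha_gram irrD alpha).
split; first exact: trace_norm_le_sqrt_trace.
by rewrite trace_norm_eq_sqrt_traceP; exact: Aalpha_gram_scalarP.
Qed.
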